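(* Let $S_X,S_Y$ be finite nonempty action sets, $\varphi:S_X\times S_Y\to\mathbb{R}$, and $\lambda\in[0,1)$. There exists a $(\varphi,\lambda)$-autocratic behavioral strategy for $X$ if and only if $\Phi_X^+\neq\emptyset$, $\Phi_X^-\neq\emptyset$, and either (i) $\Phi_X^+\cap\Phi_X^-\neq\emptyset$, or (ii) $\Phi_X^+\cap\Phi_X^-=\emptyset$ and $\lambda\ge\lambda_{\min}$, where $$\lambda_{\min}=1-\sup_{(\tau_X^+,\tau_X^-)\in\Phi_X^+\times\Phi_X^-}\frac{\min_{s_Y}\varphi(\tau_X^+,s_Y)-\max_{s_Y}\varphi(\tau_X^-,s_Y)}{\max\{\max_{s_Y}\varphi(\tau_X^+,s_Y)-\max_{s_Y}\varphi(\tau_X^-,s_Y),\ \min_{s_Y}\varphi(\tau_X^+,s_Y)-\min_{s_Y}\varphi(\tau_X^-,s_Y)\}},$$ all maxima and minima over $s_Y$ being taken over $S_Y$.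
   Context: Two players $X,Y$ play a repeated game with finite action sets $S_X,S_Y$; $\Delta(S)$ denotes the probability distributions on $S$. $\varphi$ is extended to mixed actions in its first argument by $\varphi(\tau_X,s_Y)=\mathbb{E}_{s_X\sim\tau_X}[\varphi(s_X,s_Y)]$. Histories: $\mathcal{H}=\bigcup_{T\ge0}(S_X\times S_Y)^T$. A behavioral strategy for $X$ is a map $\sigma_X:\mathcal{H}\to\Delta(S_X)$, similarly for $Y$; in each round $t$ players independently draw actions from their strategies evaluated at the history of realized action pairs of rounds $0,\dots,t-1$, and $\mathbb{E}_{\sigma_X,\sigma_Y}$ is the expectation over the resulting play. For $\lambda\in[0,1)$, $\sigma_X$ is $(\varphi,\lambda)$-autocratic if for every behavioral strategy $\sigma_Y$ of $Y$, $\mathbb{E}_{\sigma_X,\sigma_Y}\big[(1-\lambda)\sum_{t\ge0}\lambda^t\varphi(s_X^t,s_Y^t)\big]=0$. Define $\Phi_X^+=\{\tau_X\in\Delta(S_X):\min_{s_Y\in S_Y}\varphi(\tau_X,s_Y)\ge0\}$ and $\Phi_X^-=\{\tau_X\in\Delta(S_X):\max_{s_Y\in S_Y}\varphi(\tau_X,s_Y)\le0\}$. *)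

From HB Require Import structures.
From mathcomp Require Import all_boot all_order all_algebra.
From mathcomp Require Import all_classical all_reals all_analysis.
Set Implicit Arguments. Unset Strict Implicit. Unset Printing Implicit Defensive.
Import Order.TTheory GRing.Theory Num.Theory.
Import numFieldNormedType.Exports.
Local Open Scope ring_scope.
Local Open Scope classical_set_scope.

Section Game.
Variables (R : realType) (SX SY : finType).

Definition is_dist (S : finType) (tau : {ffun S -> R}) : Prop :=
  (forall s, 0 <= tau s) /\ \sum_(s : S) tau s = 1.

(* histories: sequences of realized action pairs, in chronological order *)
Definition history := seq (SX * SY)%type.

Definition stratX := history -> {ffun SX -> R}.
Definition stratY := history -> {ffun SY -> R}.
Definition behavioralX (sX : stratX) : Prop := forall h, is_dist (sX h).
Definition behavioralY (sY : stratY) : Prop := forall h, is_dist (sY h).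

Variable phi : SX -> SY -> R.

Definition hist_prob (sX : stratX) (sY : stratY) (t : nat)
    (h : t.-tuple (SX * SY)%type) : R :=
  \prod_(i < t) (sX (take i h) (tnth h i).1 * sY (take i h) (tnth h i).2).

Definition stage_payoff (sX : stratX) (sY : stratY) (t : nat) : R :=
  \sum_(h : t.-tuple (SX * SY)%type)
     hist_prob sX sY h *
     (\sum_(x : SX) \sum_(y : SY) sX h x * sY h y * phi x y).

Definition disc_partial (lam : R) (sX : stratX) (sY : stratY) (n : nat) : R :=
  \sum_(t < n) (1 - lam) * lam ^+ t * stage_payoff sX sY t.

Definition autocratic (lam : R) (sX : stratX) : Prop :=
  forall sY : stratY, behavioralY sY ->
    disc_partial lam sX sY @ \oo --> (0 : R).

Definition phiE (tau : {ffun SX -> R}) (y : SY) : R :=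
  \sum_(x : SX) tau x * phi x y.

(* max / min over S_Y (S_Y is assumed nonempty) *)
Definition maxY (tau : {ffun SX -> R}) : R :=
  match [pick y : SY] with
  | Some y0 => \big[Num.max/phiE tau y0]_(y : SY) phiE tau y
  | None => 0 end.
Definition minY (tau : {ffun SX -> R}) : R :=
  match [pick y : SY] with
  | Some y0 => \big[Num.min/phiE tau y0]_(y : SY) phiE tau y
  | None => 0 end.

Definition PhiPlus (tau : {ffun SX -> R}) : Prop := is_dist tau /\ 0 <= minY tau.
Definition PhiMinus (tau : {ffun SX -> R}) : Prop := is_dist tau /\ maxY tau <= 0.

Definition ratio (tp tm : {ffun SX -> R}) : R :=
  (minY tp - maxY tm) / Num.max (maxY tp - maxY tm) (minY tp - minY tm).

Definition lambda_min : R :=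
  1 - sup [set r : R | exists tp tm, PhiPlus tp /\ PhiMinus tm /\ r = ratio tp tm].

End Game.

From Pilot Require Import Defs.
From HB Require Import structures.
From mathcomp Require Import all_boot all_order all_algebra.
From mathcomp Require Import all_classical all_reals all_analysis.
From mathcomp Require Import ring lra.
Import Order.TTheory GRing.Theory Num.Theory.
Import numFieldNormedType.Exports.
Local Open Scope ring_scope.

(* If s enforces 0, every continuation of s reached with positive probability
   enforces its own value, and the first-round recursion
   v = (1 - lam) phi(s(), y) + lam E[v'] squeezes (1 - lam) phi(s(), .) between
   v - lam sup V and v - lam inf V, V being the set of continuation values.
   Continuations whose values approach sup V and inf V thus play mixed actions
   of Phi+ and Phi- whose ratio is almost 1 - lam, so lam >= lambda_min unless
   Phi+ and Phi- meet (for lam = 0 the first mixed action lies in both).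
   Conversely, a common element of Phi+ and Phi- played forever is autocratic.
   Otherwise compactness yields tau+, tau- of ratio >= 1 - lam, and X keeps a
   promised value v in [max phi(tau-), min phi(tau+)], starting from 0, by
   mixing tau+ and tau- so that the next promise stays in that interval; the
   promise then differs from the discounted partial sums by O(lam^n). *)

Section ZeroDeterminant.
Set Implicit Arguments. Unset Strict Implicit. Unset Printing Implicit Defensive.
Local Open Scope classical_set_scope.

Lemma big_tuple_cons (V : nmodType) (T : finType) t (f : t.+1.-tuple T -> V) :
  \sum_(h : t.+1.-tuple T) f h = \sum_(p : T) \sum_(h : t.-tuple T) f [tuple of p :: h].
Proof.
rewrite pair_big /= (reindex (fun ph : T * t.-tuple T => [tuple of ph.1 :: ph.2])) //=.
exists (fun h : t.+1.-tuple T => (thead h, [tuple of behead h])) => [[a b] _|h _] /=.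
  by rewrite theadE; congr pair; apply: val_inj.
by rewrite [RHS]tuple_eta.
Qed.

Lemma convex_comb_bound (R : numDomainType) (I : finType) (w f : I -> R) (a b : R) :
  (forall i, 0 <= w i) -> \sum_i w i = 1 -> (forall i, 0 < w i -> a <= f i <= b) ->
  a <= \sum_i w i * f i <= b.
Proof.
move=> w_ge0 w_sum1 f_in; rewrite -[a]mul1r -[b]mul1r -w_sum1 !mulr_suml.
have f_in' i : w i * a <= w i * f i <= w i * b.
  have [->|w_neq0] := eqVneq (w i) 0; first by rewrite !mul0r lexx.
  have /andP[fa fb] : a <= f i <= b by apply: f_in; rewrite lt0r w_neq0 w_ge0.
  by rewrite !ler_wpM2l.
by apply/andP; split; apply: ler_sum => i _; case/andP: (f_in' i).
Qed.

Lemma dist_le1 (R : realType) (S : finType) (tau : {ffun S -> R}) s :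
  is_dist tau -> tau s <= 1.
Proof. by case=> tau_ge0 <-; rewrite (bigD1 s) //= lerDl sumr_ge0. Qed.

Section FirstRound.
Variables (R : realType) (SX SY : finType) (phi : SX -> SY -> R).
Implicit Types (sX : stratX R SX SY) (sY : stratY R SX SY).

Definition contX (s : stratX R SX SY) (p : SX * SY) : stratX R SX SY :=
  fun h => s (p :: h).
Definition contY (s : stratY R SX SY) (p : SX * SY) : stratY R SX SY :=
  fun h => s (p :: h).

Definition mixed_payoff (tau : {ffun SX -> R}) (sig : {ffun SY -> R}) : R :=
  \sum_x \sum_y tau x * sig y * phi x y.

Definition first_weight (sX : stratX R SX SY) (sY : stratY R SX SY) (p : SX * SY) : R :=
  sX [::] p.1 * sY [::] p.2.

Lemma mixed_payoffE tau sig : mixed_payoff tau sig = \sum_y sig y * phiE phi tau y.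
Proof.
rewrite /mixed_payoff exchange_big; apply: eq_bigr => y _.
by rewrite /phiE mulr_sumr; apply: eq_bigr => x _; ring.
Qed.

Lemma hist_prob_cons sX sY t p (h : t.-tuple (SX * SY)) :
  hist_prob sX sY [tuple of p :: h] =
  first_weight sX sY p * hist_prob (contX sX p) (contY sY p) h.
Proof.
rewrite /hist_prob big_ord_recl /= tnth0; congr (_ * _).
by apply: eq_bigr => i _; rewrite tnthS.
Qed.

Lemma stage_payoff0 sX sY : stage_payoff phi sX sY 0 = mixed_payoff (sX [::]) (sY [::]).
Proof.
rewrite /stage_payoff (big_pred1 [tuple]) => [|h]; last by rewrite [h]tuple0; apply/esym/eqP.
by rewrite /hist_prob big_ord0 mul1r.
Qed.

Lemma stage_payoffS sX sY t :
  stage_payoff phi sX sY t.+1 =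
  \sum_p first_weight sX sY p * stage_payoff phi (contX sX p) (contY sY p) t.
Proof.
rewrite /stage_payoff big_tuple_cons; apply: eq_bigr => p _.
by rewrite mulr_sumr; apply: eq_bigr => h _; rewrite hist_prob_cons mulrA.
Qed.

Variable lam : R.

Lemma disc_partial0 sX sY : disc_partial phi lam sX sY 0 = 0.
Proof. by rewrite /disc_partial big_ord0. Qed.

Lemma disc_partialS sX sY n :
  disc_partial phi lam sX sY n.+1 =
  (1 - lam) * mixed_payoff (sX [::]) (sY [::]) +
  lam * \sum_p first_weight sX sY p * disc_partial phi lam (contX sX p) (contY sY p) n.
Proof.
rewrite /disc_partial big_ord_recl expr0 mulr1 stage_payoff0; congr (_ + _).
rewrite mulr_sumr; under [RHS]eq_bigr do rewrite mulr_sumr mulr_sumr.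
rewrite exchange_big /=; apply: eq_bigr => i _.
rewrite stage_payoffS mulr_sumr; apply: eq_bigr => p _.
by rewrite exprS; ring.
Qed.

End FirstRound.

Section Bounds.
Variables (R : realType) (SX SY : finType) (phi : SX -> SY -> R) (lam : R).
Hypotheses (lam_ge0 : 0 <= lam) (lam_lt1 : lam < 1).
Implicit Types (sX : stratX R SX SY) (sY : stratY R SX SY).

Definition payoff_bound : R := \sum_x \sum_y `|phi x y|.

Lemma payoff_bound_ge0 : 0 <= payoff_bound.
Proof. by apply: sumr_ge0 => x _; apply: sumr_ge0. Qed.

Lemma phiE_bound tau y : is_dist tau -> `|phiE phi tau y| <= payoff_bound.
Proof.
move=> tau_dist; apply: le_trans (ler_norm_sum _ _ _) _.
apply: (@le_trans _ _ (\sum_x `|phi x y|)).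
  apply: ler_sum => x _; rewrite normrM ger0_norm ?(tau_dist.1 x) //.
  by rewrite ler_piMl // dist_le1.
by apply: ler_sum => x _; rewrite (bigD1 y) //= lerDl sumr_ge0.
Qed.

Lemma mixed_payoff_bound tau sig : is_dist tau -> is_dist sig ->
  `|mixed_payoff phi tau sig| <= payoff_bound.
Proof.
move=> tau_dist [sig_ge0 sig_sum1]; rewrite mixed_payoffE ler_norml.
apply: convex_comb_bound => // y _; rewrite -ler_norml; exact: phiE_bound.
Qed.

Lemma behavioralX_cont sX p : behavioralX sX -> behavioralX (contX sX p).
Proof. by move=> sX_beh h; apply: sX_beh. Qed.

Lemma behavioralY_cont sY p : behavioralY sY -> behavioralY (contY sY p).
Proof. by move=> sY_beh h; apply: sY_beh. Qed.

Section Weights.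
Variables (sX : stratX R SX SY) (sY : stratY R SX SY).
Hypotheses (sX_beh : behavioralX sX) (sY_beh : behavioralY sY).

Lemma first_weight_ge0 p : 0 <= first_weight sX sY p.
Proof. by rewrite mulr_ge0 //; [apply: (sX_beh _).1|apply: (sY_beh _).1]. Qed.

Lemma first_weight_sum1 : \sum_p first_weight sX sY p = 1.
Proof.
rewrite -(pair_big xpredT xpredT (fun x y => sX [::] x * sY [::] y)) /=.
under eq_bigr do rewrite -mulr_sumr (sY_beh [::]).2 mulr1.
exact: (sX_beh [::]).2.
Qed.

Lemma first_weight_comb_bound (f : SX * SY -> R) a b : (forall p, a <= f p <= b) ->
  a <= \sum_p first_weight sX sY p * f p <= b.
Proof.
move=> f_in; apply: convex_comb_bound => //; [exact: first_weight_ge0|exact: first_weight_sum1].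
Qed.

Lemma first_weight_snd (F : SY -> R) :
  \sum_p first_weight sX sY p * F p.2 = \sum_y sY [::] y * F y.
Proof.
rewrite -(pair_big xpredT xpredT (fun x y => first_weight sX sY (x, y) * F y)) /=.
under eq_bigr do under eq_bigr do rewrite /first_weight -mulrA.
by rewrite -exchange_big /=; under eq_bigr do rewrite -mulr_suml (sX_beh [::]).2 mul1r.
Qed.

End Weights.

Lemma stage_payoff_bound t sX sY : behavioralX sX -> behavioralY sY ->
  `|stage_payoff phi sX sY t| <= payoff_bound.
Proof.
elim: t sX sY => [|t IH] sX sY sX_beh sY_beh.
  by rewrite stage_payoff0; apply: mixed_payoff_bound.
rewrite stage_payoffS ler_norml; apply: first_weight_comb_bound => // p.
by rewrite -ler_norml; apply: IH; [apply: behavioralX_cont|apply: behavioralY_cont].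
Qed.

Lemma geometric_weights_sum n : \sum_(t < n) (1 - lam) * lam ^+ t = 1 - lam ^+ n.
Proof.
elim: n => [|n IH]; first by rewrite big_ord0 expr0 subrr.
by rewrite big_ord_recr /= IH exprS; ring.
Qed.

Lemma geometric_weight_ge0 t : 0 <= (1 - lam) * lam ^+ t.
Proof. by rewrite mulr_ge0 ?exprn_ge0 // subr_ge0 ltW. Qed.

Lemma disc_partial_bound n sX sY : behavioralX sX -> behavioralY sY ->
  `|disc_partial phi lam sX sY n| <= payoff_bound.
Proof.
move=> sX_beh sY_beh; apply: le_trans (ler_norm_sum _ _ _) _.
apply: (@le_trans _ _ (\sum_(t < n) (1 - lam) * lam ^+ t * payoff_bound)).
  apply: ler_sum => t _; rewrite normrM ger0_norm ?geometric_weight_ge0 //.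
  by rewrite ler_wpM2l ?geometric_weight_ge0 ?stage_payoff_bound.
rewrite -mulr_suml geometric_weights_sum ler_piMl ?payoff_bound_ge0 //.
by rewrite gerBl exprn_ge0.
Qed.

Lemma disc_partial_cvg sX sY : behavioralX sX -> behavioralY sY ->
  cvgn (disc_partial phi lam sX sY).
Proof.
move=> sX_beh sY_beh.
have -> : disc_partial phi lam sX sY =
    series (fun t => (1 - lam) * lam ^+ t * stage_payoff phi sX sY t).
  by apply/funext => n; rewrite /series /= big_mkord.
apply: normed_cvg.
have lam_norm : `|lam| < 1 by rewrite ger0_norm.
apply: (@series_le_cvg _ (fun t => `|(1 - lam) * lam ^+ t * stage_payoff phi sX sY t|)
  (geometric ((1 - lam) * payoff_bound) lam)) => [t|t|t|]; rewrite /geometric.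
- exact: normr_ge0.
- by rewrite mulr_ge0 ?exprn_ge0 // mulr_ge0 ?payoff_bound_ge0 // subr_ge0 ltW.
- rewrite /= normrM ger0_norm ?geometric_weight_ge0 // mulrAC ler_wpM2r ?exprn_ge0 //.
  by rewrite ler_wpM2l ?subr_ge0 ?stage_payoff_bound // ltW.
exact: is_cvg_geometric_series.
Qed.

End Bounds.

Section Values.
Variables (R : realType) (SX SY : finType) (phi : SX -> SY -> R) (lam : R).
Hypotheses (lam_ge0 : 0 <= lam) (lam_lt1 : lam < 1).
Variable y0 : SY.
Implicit Types (s : stratX R SX SY) (sY : stratY R SX SY).

Definition pure (y : SY) : {ffun SY -> R} := [ffun y' => (y' == y)%:R].

Lemma pure_dist y : is_dist (pure y).
Proof.
split=> [y'|]; first by rewrite ffunE ler0n.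
by rewrite (bigD1 y) //= ffunE eqxx big1 ?addr0 // => y' /negbTE; rewrite ffunE => ->.
Qed.

Lemma sum_pure y (f : SY -> R) : \sum_y' pure y y' * f y' = f y.
Proof.
rewrite (bigD1 y) //= ffunE eqxx mul1r big1 ?addr0 // => y' /negbTE.
by rewrite ffunE => ->; rewrite mul0r.
Qed.

Definition constY : stratY R SX SY := fun _ => pure y0.

Definition deviateY (y : SY) (F : SX -> stratY R SX SY) : stratY R SX SY :=
  fun h => if h is p :: h' then F p.1 h' else pure y.

Lemma constY_beh : behavioralY constY.
Proof. by move=> h; apply: pure_dist. Qed.

Lemma deviateY_beh y F : (forall x, behavioralY (F x)) -> behavioralY (deviateY y F).
Proof. by move=> F_beh [|p h] /=; [apply: pure_dist|apply: F_beh]. Qed.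

Lemma disc_partial_deviateY s y F n :
  disc_partial phi lam s (deviateY y F) n.+1 =
  (1 - lam) * phiE phi (s [::]) y +
  lam * \sum_x s [::] x * disc_partial phi lam (contX s (x, y)) (F x) n.
Proof.
rewrite disc_partialS mixed_payoffE sum_pure; congr (_ + lam * _).
transitivity (\sum_x \sum_y'
  s [::] x * (pure y y' * disc_partial phi lam (contX s (x, y')) (F x) n)).
  by rewrite pair_big /=; apply: eq_bigr => -[x y'] _; rewrite /first_weight mulrA.
by apply: eq_bigr => x _; rewrite -mulr_sumr sum_pure.
Qed.

Definition enforces s (c : R) :=
  forall sY, behavioralY sY -> disc_partial phi lam s sY @ \oo --> c.

(* Only meaningful when [s] enforces some value, which any [sY] then reads off. *)
Definition value s : R := lim (disc_partial phi lam s constY @ \oo).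

Lemma value_cvg s : behavioralX s -> disc_partial phi lam s constY @ \oo --> value s.
Proof. by move=> s_beh; apply: disc_partial_cvg constY_beh. Qed.

Lemma value_bound s : behavioralX s -> `|value s| <= payoff_bound phi.
Proof.
move=> s_beh; apply: (cvgr_to_le (cvg_norm (value_cvg s_beh))).
by apply: nearW => n; apply: disc_partial_bound => //; exact: constY_beh.
Qed.

Lemma enforces_value s c : enforces s c -> value s = c.
Proof. by move=> s_enf; apply: cvg_lim; [exact: Rhausdorff|exact: s_enf constY_beh]. Qed.

Lemma enforces_recursion s c y : behavioralX s -> enforces s c ->
  c = (1 - lam) * phiE phi (s [::]) y + lam * \sum_x s [::] x * value (contX s (x, y)).
Proof.
move=> s_beh s_enf.
have := s_enf _ (deviateY_beh y (fun _ => constY_beh)).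
rewrite -cvg_shiftS /=; under eq_fun do rewrite disc_partial_deviateY.
move=> lim_c; apply: (cvg_unique (@Rhausdorff R) lim_c); apply: cvgD; first exact: cvg_cst.
apply: cvgM; first exact: cvg_cst.
apply: cvg_big => [|x _]; first exact: add_continuous.
by apply: cvgM; [exact: cvg_cst|apply: value_cvg; apply: behavioralX_cont].
Qed.

Lemma enforces_contX s c x0 y : 0 < lam -> behavioralX s -> enforces s c -> 0 < s [::] x0 ->
  enforces (contX s (x0, y)) (value (contX s (x0, y))).
Proof.
move=> lam_gt0 s_beh s_enf s_x0 sY sY_beh.
pose F x := if x == x0 then sY else constY.
have F_beh x : behavioralY (F x) by rewrite /F; case: eqP => _; [exact: sY_beh|exact: constY_beh].
set k := lam * s [::] x0.
have -> : disc_partial phi lam (contX s (x0, y)) sY = fun n =>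
    disc_partial phi lam (contX s (x0, y)) constY n +
    (disc_partial phi lam s (deviateY y F) n.+1 -
     disc_partial phi lam s (deviateY y (fun _ => constY)) n.+1) / k.
  apply/funext => n; rewrite !disc_partial_deviateY (bigD1 x0) //= [in X in _ - X](bigD1 x0) //=.
  under eq_bigr => x /negbTE x_neq_x0 do rewrite /F x_neq_x0.
  by rewrite /F eqxx /k; field; rewrite !gt_eqF.
rewrite -[X in _ --> X]addr0 -(mul0r k^-1) -(subrr c).
apply: cvgD; first by apply: value_cvg; apply: behavioralX_cont.
apply: cvgM; last exact: cvg_cst.
apply: cvgB; rewrite (cvg_shiftS (disc_partial _ _ _ _)); apply: s_enf.
  exact: deviateY_beh.
exact: deviateY_beh (fun _ => constY_beh).
Qed.

End Values.

Section MinMaxY.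
Variables (R : realType) (SX SY : finType) (phi : SX -> SY -> R) (y0 : SY).
Implicit Types tau tp tm : {ffun SX -> R}.

Let pickY : exists y1, [pick y : SY] = Some y1.
Proof. by case: pickP => [y _|/(_ y0)//]; exists y. Qed.

Lemma minY_le tau y : minY phi tau <= phiE phi tau y.
Proof. by rewrite /minY; have [y1 ->] := pickY; rewrite (bigD1 y) //= ge_min lexx. Qed.

Lemma le_maxY tau y : phiE phi tau y <= maxY phi tau.
Proof. by rewrite /maxY; have [y1 ->] := pickY; rewrite (bigD1 y) //= le_max lexx. Qed.

Lemma le_minY tau z : (forall y, z <= phiE phi tau y) -> z <= minY phi tau.
Proof.
move=> z_le; rewrite /minY; have [y1 ->] := pickY.
by apply: (big_ind (fun v => z <= v)) => // a b za zb; rewrite le_min za zb.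
Qed.

Lemma maxY_le tau z : (forall y, phiE phi tau y <= z) -> maxY phi tau <= z.
Proof.
move=> le_z; rewrite /maxY; have [y1 ->] := pickY.
by apply: (big_ind (fun v => v <= z)) => // a b az bz; rewrite ge_max az bz.
Qed.

Lemma minY_attained tau : exists y, minY phi tau = phiE phi tau y.
Proof.
rewrite /minY; have [y1 ->] := pickY.
apply: (big_ind (fun v => exists y, v = phiE phi tau y)) => [|a b [ya ->] [yb ->]|y _];
  [by exists y1| |by exists y].
by case: (leP (phiE phi tau ya) (phiE phi tau yb)) => _; [exists ya|exists yb].
Qed.

Lemma maxY_attained tau : exists y, maxY phi tau = phiE phi tau y.
Proof.
rewrite /maxY; have [y1 ->] := pickY.
apply: (big_ind (fun v => exists y, v = phiE phi tau y)) => [|a b [ya ->] [yb ->]|y _];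
  [by exists y1| |by exists y].
by case: (leP (phiE phi tau ya) (phiE phi tau yb)) => _; [exists yb|exists ya].
Qed.

Lemma minY_le_maxY tau : minY phi tau <= maxY phi tau.
Proof. exact: le_trans (minY_le tau y0) (le_maxY tau y0). Qed.

Lemma PhiPlus_PhiMinus_phiE0 tau : PhiPlus phi tau -> PhiMinus phi tau ->
  forall y, phiE phi tau y = 0.
Proof.
move=> [_ min_ge0] [_ max_le0] y.
by apply/eqP; rewrite eq_le (le_trans (le_maxY tau y)) // (le_trans _ (minY_le tau y)).
Qed.

Lemma zero_payoff_PhiPlus_PhiMinus tau : is_dist tau -> (forall y, phiE phi tau y = 0) ->
  PhiPlus phi tau /\ PhiMinus phi tau.
Proof.
move=> tau_dist phiE0; split; split => //.
  by apply: le_minY => y; rewrite phiE0.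
by apply: maxY_le => y; rewrite phiE0.
Qed.

Lemma ratio_le1 tp tm : PhiPlus phi tp -> PhiMinus phi tm -> Defs.ratio phi tp tm <= 1.
Proof.
move=> [_ tp_ge0] [_ tm_le0]; rewrite /Defs.ratio.
have num_le : minY phi tp - maxY phi tm <= Num.max (maxY phi tp - maxY phi tm)
    (minY phi tp - minY phi tm) by rewrite le_max lerD2r minY_le_maxY.
have [D_gt0|D_lt0|->] := ltrgt0P (Num.max (maxY phi tp - maxY phi tm) (minY phi tp - minY phi tm)).
- by rewrite ler_pdivrMr // mul1r.
- by move: num_le; lra.
- by rewrite invr0 mulr0.
Qed.

End MinMaxY.

Lemma sup_adherent_scaled (R : realType) (S : set R) (k d : R) :
  0 <= k -> k < 1 -> S 0 -> 0 < d -> has_ubound S ->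
  exists2 c, S c & sup S - d <= c /\ k * sup S <= c.
Proof.
move=> k_ge0 k_lt1 S0 d_gt0 S_ub; have S_sup : has_sup S by split; [exists 0|].
have : 0 <= sup S by apply: ub_le_sup.
rewrite le_eqVlt => /orP[/eqP M_eq0|M_gt0].
  by exists 0 => //; rewrite -M_eq0 mulr0; split; lra.
pose e := Num.min d ((1 - k) * sup S).
have e_gt0 : 0 < e by rewrite lt_min d_gt0 mulr_gt0 // subr_gt0.
have [c Sc ltc] := sup_adherent e_gt0 S_sup.
have : e <= d by rewrite ge_min lexx.
have : e <= (1 - k) * sup S by rewrite ge_min lexx orbT.
by exists c => //; split; lra.
Qed.

Lemma inf_adherent_scaled (R : realType) (S : set R) (k d : R) :
  0 <= k -> k < 1 -> S 0 -> 0 < d -> has_lbound S ->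
  exists2 c, S c & c <= inf S + d /\ c <= k * inf S.
Proof.
move=> k_ge0 k_lt1 S0 d_gt0 S_lb; have S_inf : has_inf S by split; [exists 0|].
have : inf S <= 0 by apply: ge_inf.
rewrite le_eqVlt => /orP[/eqP m_eq0|m_lt0].
  by exists 0 => //; rewrite m_eq0 mulr0; split; lra.
pose e := Num.min d ((k - 1) * inf S).
have e_gt0 : 0 < e by rewrite lt_min d_gt0 nmulr_rgt0 // subr_lt0.
have [c Sc ltc] := inf_adherent e_gt0 S_inf.
have : e <= d by rewrite ge_min lexx.
have : e <= (k - 1) * inf S by rewrite ge_min lexx orbT.
by exists c => //; split; lra.
Qed.

(* [cp] and [cq] are continuation values within [d] of the extreme values [M] and [m];
   [A], [a] ([B], [b]) are min and max payoffs of their first mixed actions. *)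
Lemma extremal_ratio_bound (R : realFieldType) (lam M m d cp cq A a B b : R) :
  0 <= lam -> lam < 1 -> m < M -> 0 <= d -> 4 * d <= (1 - lam) * (M - m) ->
  M - d <= cp -> cq <= m + d -> A <= a ->
  cp - lam * M <= (1 - lam) * A -> (1 - lam) * a <= cp - lam * m ->
  cq - lam * M <= (1 - lam) * B -> (1 - lam) * b <= cq - lam * m ->
  1 - lam - 4 * d / ((1 - lam) * (M - m)) <= (A - b) / Num.max (a - b) (A - B).
Proof.
move=> lam_ge0 lam_lt1 mM d_ge0 d_small cp_ge cq_le Aa hA ha hB hb.
have mu_gt0 : 0 < 1 - lam by lra.
set D := Num.max _ _.
have num_ge : (1 - lam) * (M - m) - 2 * d <= (1 - lam) * (A - b) by lra.
have D_ge : A - b <= D by rewrite le_max lerD2r Aa.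
have gap : - (2 * d) <= (1 - lam) * (A - b) - (1 - lam) * (1 - lam) * D.
  have lcp : 0 <= lam * (cp - M + d) by apply: mulr_ge0; lra.
  have lcq : 0 <= lam * (m + d - cq) by apply: mulr_ge0; lra.
  have ld : lam * d <= d by rewrite ler_piMl //; lra.
  have [->|->] : D = a - b \/ D = A - B by rewrite /D maxEle; case: ifP; [right|left].
  - have h1 : (1 - lam) * ((1 - lam) * a) <= (1 - lam) * (cp - lam * m).
      by rewrite ler_wpM2l //; lra.
    have h2 : lam * ((1 - lam) * b) <= lam * (cq - lam * m) by rewrite ler_wpM2l.
    nra.
  - have h1 : lam * (cp - lam * M) <= lam * ((1 - lam) * A) by rewrite ler_wpM2l.
    have h2 : (1 - lam) * (cq - lam * M) <= (1 - lam) * ((1 - lam) * B).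
      by rewrite ler_wpM2l //; lra.
    nra.
have D_gt0 : 0 < D.
  have : 0 < (1 - lam) * (A - b) by nra.
  by rewrite pmulr_rgt0 //; lra.
set q := 4 * d / ((1 - lam) * (M - m)).
have q_ge0 : 0 <= q by rewrite divr_ge0 ?mulr_ge0 //; lra.
have q_eq : q * ((1 - lam) * (M - m)) = 4 * d by rewrite /q mulfVK // mulf_neq0 // gt_eqF //; lra.
have qD : 2 * d <= q * (1 - lam) * D.
  have : (1 - lam) * (M - m) <= 2 * ((1 - lam) * D) by nra.
  nra.
rewrite ler_pdivlMr // -(ler_pM2l mu_gt0); nra.
Qed.

Inductive reachable (R : realType) (SX SY : finType) (s0 : stratX R SX SY) :
    stratX R SX SY -> Prop :=
  | reachable0 : reachable s0 s0
  | reachable_contX s x y : reachable s0 s -> 0 < s [::] x -> reachable s0 (contX s (x, y)).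

Section Necessity.
Variables (R : realType) (SX SY : finType) (phi : SX -> SY -> R) (lam : R) (y0 : SY).
Variable s0 : stratX R SX SY.
Hypotheses (lam_gt0 : 0 < lam) (lam_lt1 : lam < 1).
Hypotheses (s0_beh : behavioralX s0) (s0_enf : enforces phi lam s0 0).
Implicit Types (s : stratX R SX SY).

Local Notation value := (value phi lam y0).
Local Notation common := (exists t, PhiPlus phi t /\ PhiMinus phi t).

Lemma reachable_enforces s : reachable s0 s -> behavioralX s /\ enforces phi lam s (value s).
Proof.
elim=> [|s1 x y _ [s_beh s_enf] s_x]; first by rewrite (enforces_value y0 s0_enf).
split; first exact: behavioralX_cont.
exact: (enforces_contX (ltW lam_gt0) lam_lt1 lam_gt0 s_beh s_enf s_x).
Qed.

Definition reachable_values : set R := value @` reachable s0.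
Local Notation vmax := (sup reachable_values).
Local Notation vmin := (inf reachable_values).

Lemma reachable_values0 : reachable_values 0.
Proof. by exists s0; [exact: reachable0|rewrite (enforces_value y0 s0_enf)]. Qed.

Lemma reachable_values_bound c : reachable_values c -> `|c| <= payoff_bound phi.
Proof.
case=> s s_reach <-; apply: (value_bound _ (ltW lam_gt0) lam_lt1).
by case: (reachable_enforces s_reach).
Qed.

Lemma reachable_values_ub : has_ubound reachable_values.
Proof.
by exists (payoff_bound phi) => c /reachable_values_bound; rewrite ler_norml => /andP[].
Qed.

Lemma reachable_values_lb : has_lbound reachable_values.
Proof.
by exists (- payoff_bound phi) => c /reachable_values_bound; rewrite ler_norml => /andP[].
Qed.

Lemma value_le_vmax s : reachable s0 s -> value s <= vmax.
Proof. by move=> s_reach; apply: ub_le_sup reachable_values_ub _ _; exists s. Qed.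

Lemma vmin_le_value s : reachable s0 s -> vmin <= value s.
Proof. by move=> s_reach; apply: ge_inf reachable_values_lb _ _; exists s. Qed.

Lemma reachable_phiE_bounds s y : reachable s0 s ->
  value s - lam * vmax <= (1 - lam) * phiE phi (s [::]) y <= value s - lam * vmin.
Proof.
move=> s_reach; have [s_beh s_enf] := reachable_enforces s_reach.
have /andP[lb ub] : vmin <= \sum_x s [::] x * value (contX s (x, y)) <= vmax.
  apply: convex_comb_bound; [exact: (s_beh _).1|exact: (s_beh _).2|] => x s_x.
  have xy_reach := reachable_contX y s_reach s_x.
  by rewrite vmin_le_value ?value_le_vmax.
rewrite (enforces_recursion (ltW lam_gt0) lam_lt1 y0 y s_beh s_enf).
have := ler_wpM2l (ltW lam_gt0) lb; have := ler_wpM2l (ltW lam_gt0) ub.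
by move=> ? ?; apply/andP; split; lra.
Qed.

Lemma reachable_minY_maxY s : reachable s0 s ->
  value s - lam * vmax <= (1 - lam) * minY phi (s [::]) /\
  (1 - lam) * maxY phi (s [::]) <= value s - lam * vmin.
Proof.
move=> s_reach; have [y1 ->] := minY_attained phi y0 (s [::]).
have [y2 ->] := maxY_attained phi y0 (s [::]).
have /andP[-> _] := reachable_phiE_bounds y1 s_reach.
by have /andP[_ ->] := reachable_phiE_bounds y2 s_reach.
Qed.

Lemma reachable_PhiPlus s : reachable s0 s -> lam * vmax <= value s -> PhiPlus phi (s [::]).
Proof.
move=> s_reach high; split; first by case: (reachable_enforces s_reach).
have [lb _] := reachable_minY_maxY s_reach.
have mu_gt0 : 0 < 1 - lam by rewrite subr_gt0.
by rewrite -(pmulr_rge0 _ mu_gt0); lra.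
Qed.

Lemma reachable_PhiMinus s : reachable s0 s -> value s <= lam * vmin -> PhiMinus phi (s [::]).
Proof.
move=> s_reach low; split; first by case: (reachable_enforces s_reach).
have [_ ub] := reachable_minY_maxY s_reach.
have mu_gt0 : 0 < 1 - lam by rewrite subr_gt0.
by rewrite -(pmulr_rle0 _ mu_gt0); lra.
Qed.

Lemma exists_PhiPlus : exists tp, PhiPlus phi tp.
Proof.
have [_ [p p_reach <-] [_ p_high]] := sup_adherent_scaled (ltW lam_gt0) lam_lt1
  reachable_values0 ltr01 reachable_values_ub.
by exists (p [::]); apply: reachable_PhiPlus.
Qed.

Lemma exists_PhiMinus : exists tm, PhiMinus phi tm.
Proof.
have [_ [q q_reach <-] [_ q_low]] := inf_adherent_scaled (ltW lam_gt0) lam_lt1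
  reachable_values0 ltr01 reachable_values_lb.
by exists (q [::]); apply: reachable_PhiMinus.
Qed.

Lemma vmin_lt_vmax : ~ common -> vmin < vmax.
Proof.
move=> no_common; rewrite ltNge; apply/negP => vmax_le_vmin; apply: no_common.
have v0 : value s0 = 0 := enforces_value y0 s0_enf.
have vmax_ge0 : 0 <= vmax by rewrite -v0 value_le_vmax //; exact: reachable0.
have vmin_le0 : vmin <= 0 by rewrite -v0 vmin_le_value //; exact: reachable0.
have lam_ge0 := ltW lam_gt0.
exists (s0 [::]); split; [apply: reachable_PhiPlus|apply: reachable_PhiMinus];
  rewrite ?v0; try exact: reachable0; nra.
Qed.

Lemma ratio_near_one_minus_lam e : 0 < e -> ~ common ->
  exists tp tm, [/\ PhiPlus phi tp, PhiMinus phi tm & 1 - lam - e <= Defs.ratio phi tp tm].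
Proof.
move=> e_gt0 /vmin_lt_vmax gap.
have mu_gt0 : 0 < 1 - lam by rewrite subr_gt0.
pose e' := Num.min e 1.
have e'_gt0 : 0 < e' by rewrite lt_min e_gt0 ltr01.
pose d := (1 - lam) * (vmax - vmin) * e' / 4.
have d_gt0 : 0 < d by rewrite !mulr_gt0 ?subr_gt0.
have d_small : 4 * d <= (1 - lam) * (vmax - vmin).
  rewrite /d mulrC divfK ?pnatr_eq0 // ler_piMr ?ge_min ?lexx ?orbT //.
  by rewrite mulr_ge0 // subr_ge0 ltW.
have [_ [p p_reach <-] [p_near p_high]] :=
  sup_adherent_scaled (ltW lam_gt0) lam_lt1 reachable_values0 d_gt0 reachable_values_ub.
have [_ [q q_reach <-] [q_near q_low]] :=
  inf_adherent_scaled (ltW lam_gt0) lam_lt1 reachable_values0 d_gt0 reachable_values_lb.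
exists (p [::]), (q [::]); split;
  [exact: reachable_PhiPlus|exact: reachable_PhiMinus|].
have [hA ha] := reachable_minY_maxY p_reach; have [hB hb] := reachable_minY_maxY q_reach.
apply: le_trans (extremal_ratio_bound (ltW lam_gt0) lam_lt1 gap (ltW d_gt0) d_small
  p_near q_near (minY_le_maxY phi y0 _) hA ha hB hb).
have -> : 4 * d / ((1 - lam) * (vmax - vmin)) = e'.
  by rewrite /d; field; rewrite !gt_eqF ?subr_gt0.
by rewrite lerD2l lerN2 ge_min lexx.
Qed.

Lemma lambda_min_le : ~ common -> lambda_min phi <= lam.
Proof.
move=> no_common; rewrite /lambda_min; set Q := [set r | _].
have Q_ub : has_ubound Q.
  by exists 1 => r [tp [tm [hp [hm ->]]]]; exact: (ratio_le1 y0 hp hm).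
rewrite lerBlDr -lerBlDl; apply/ler_addgt0Pr => e e_gt0.
have [tp [tm [hp hm near]]] := ratio_near_one_minus_lam e_gt0 no_common.
rewrite -lerBlDr; apply: le_trans near _.
by apply: ub_le_sup Q_ub _ _; exists tp, tm.
Qed.

End Necessity.

Lemma autocratic_necessary (R : realType) (SX SY : finType) (phi : SX -> SY -> R)
    (lam : R) (y0 : SY) (s0 : stratX R SX SY) :
  0 <= lam -> lam < 1 -> behavioralX s0 -> autocratic phi lam s0 ->
  (exists tp, PhiPlus phi tp) /\ (exists tm, PhiMinus phi tm) /\
  ((exists t, PhiPlus phi t /\ PhiMinus phi t) \/
   (~ (exists t, PhiPlus phi t /\ PhiMinus phi t) /\ lambda_min phi <= lam)).
Proof.
move=> lam_ge0 lam_lt1 s0_beh s0_aut.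
have s0_enf : enforces phi lam s0 0 := s0_aut.
move: (lam_ge0); rewrite le0r => /orP[/eqP lam0|lam_gt0].
  have phiE0 y : phiE phi (s0 [::]) y = 0.
    have := enforces_recursion lam_ge0 lam_lt1 y0 y s0_beh s0_enf.
    by rewrite lam0 mul0r addr0 subr0 mul1r.
  have [hp hm] := zero_payoff_PhiPlus_PhiMinus y0 (s0_beh [::]) phiE0.
  by split; [|split; [|left]]; exists (s0 [::]).
split; first exact (exists_PhiPlus y0 lam_gt0 lam_lt1 s0_beh s0_enf).
split; first exact (exists_PhiMinus y0 lam_gt0 lam_lt1 s0_beh s0_enf).
have [common|no_common] := pselect (exists t, PhiPlus phi t /\ PhiMinus phi t); first by left.
by right; split => //; exact (lambda_min_le y0 lam_gt0 lam_lt1 s0_beh s0_enf no_common).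
Qed.

Section Sufficiency.
Variables (R : realType) (SX SY : finType) (phi : SX -> SY -> R) (lam : R) (y0 : SY).
Hypotheses (lam_ge0 : 0 <= lam) (lam_lt1 : lam < 1).

Lemma stationary_autocratic t : PhiPlus phi t -> PhiMinus phi t ->
  exists sX : stratX R SX SY, behavioralX sX /\ autocratic phi lam sX.
Proof.
move=> t_plus t_minus; have phiE0 := PhiPlus_PhiMinus_phiE0 y0 t_plus t_minus.
exists (fun _ => t); split=> [h|sY _]; first by case: t_plus.
have stage0 n sY' : stage_payoff phi (fun _ => t) sY' n = 0.
  elim: n sY' => [|n IH] sY'.
    by rewrite stage_payoff0 mixed_payoffE big1 // => y _; rewrite phiE0 mulr0.
  by rewrite stage_payoffS big1 // => p _; rewrite IH mulr0.
have -> : disc_partial phi lam (fun _ => t) sY = fun _ => 0.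
  by apply/funext => n; rewrite /disc_partial big1 // => i _; rewrite stage0 mulr0.
exact: cvg_cst.
Qed.

Section TargetStrategy.
Variables tp tm : {ffun SX -> R}.
Hypotheses (tp_plus : PhiPlus phi tp) (tm_minus : PhiMinus phi tm).
Hypothesis ratio_ge : 1 - lam <= Defs.ratio phi tp tm.

Let A := minY phi tp.
Let a := maxY phi tp.
Let B := minY phi tm.
Let b := maxY phi tm.

Lemma ratio_ge_bounds : b < A /\ (1 - lam) * a <= A - lam * b /\ b - lam * A <= (1 - lam) * B.
Proof.
have mu_gt0 : 0 < 1 - lam by rewrite subr_gt0.
have A_ge0 : 0 <= A by case: tp_plus.
have b_le0 : b <= 0 by case: tm_minus.
have Aa : A <= a := minY_le_maxY phi y0 tp.
have Bb : B <= b := minY_le_maxY phi y0 tm.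
move: ratio_ge; rewrite /Defs.ratio -/A -/a -/b -/B; set D := Num.max _ _ => ratio_ge'.
have D_ge : A - b <= D by rewrite /D le_max lerD2r Aa.
have Ab_gt0 : 0 < A - b.
  rewrite lt_neqAle subr_ge0 (le_trans b_le0 A_ge0) andbT; apply/negP => /eqP Ab0.
  by move: ratio_ge'; rewrite -Ab0 mul0r; lra.
have D_gt0 : 0 < D := lt_le_trans Ab_gt0 D_ge.
have muD : (1 - lam) * D <= A - b by rewrite -ler_pdivlMr.
have h1 : (1 - lam) * (a - b) <= (1 - lam) * D by rewrite ler_wpM2l ?le_max ?lexx //; lra.
have h2 : (1 - lam) * (A - B) <= (1 - lam) * D by rewrite ler_wpM2l ?le_max ?lexx ?orbT //; lra.
by split; [|split]; lra.
Qed.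

(* Clamped so that [mix v] is a distribution for every [v]. *)
Definition weight v := Num.min 1 (Num.max 0 ((v - b) / (A - b))).
Definition mix v : {ffun SX -> R} := [ffun x => weight v * tp x + (1 - weight v) * tm x].

Lemma weight_in01 v : 0 <= weight v <= 1.
Proof. by rewrite /weight le_min ler01 le_max lexx ge_min lexx. Qed.

Lemma weightE v : b <= v <= A -> v = weight v * A + (1 - weight v) * b.
Proof.
move=> /andP[bv vA]; have [bA _] := ratio_ge_bounds.
have Ab_gt0 : 0 < A - b by rewrite subr_gt0.
have w_ge0 : 0 <= (v - b) / (A - b) by apply: divr_ge0; [rewrite subr_ge0|exact: ltW].
have w_le1 : (v - b) / (A - b) <= 1 by rewrite ler_pdivrMr // mul1r lerD2r.
by rewrite /weight (max_idPr w_ge0) (min_idPr w_le1); field; rewrite gt_eqF.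
Qed.

Lemma mix_dist v : is_dist (mix v).
Proof.
have /andP[w_ge0 w_le1] := weight_in01 v.
case: tp_plus => -[tp_ge0 tp_sum1] _; case: tm_minus => -[tm_ge0 tm_sum1] _.
split=> [x|]; first by rewrite ffunE addr_ge0 ?mulr_ge0 ?subr_ge0.
under eq_bigr do rewrite ffunE.
by rewrite big_split /= -!mulr_sumr tp_sum1 tm_sum1 !mulr1 subrKC.
Qed.

Lemma phiE_mix v y :
  phiE phi (mix v) y = weight v * phiE phi tp y + (1 - weight v) * phiE phi tm y.
Proof.
rewrite /phiE !mulr_sumr -big_split; apply: eq_bigr => x _.
by rewrite ffunE mulrDl !mulrA.
Qed.

Lemma mix_phiE_bounds v y : b <= v <= A ->
  v - lam * A <= (1 - lam) * phiE phi (mix v) y <= v - lam * b.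
Proof.
move=> v_in; have [_ [aA bB]] := ratio_ge_bounds.
have mu_ge0 : 0 <= 1 - lam by rewrite subr_ge0 ltW.
have /andP[w_ge0 w_le1] := weight_in01 v.
have w'_ge0 : 0 <= 1 - weight v by rewrite subr_ge0.
have tp_lb := minY_le phi y0 tp y; have tp_ub := le_maxY phi y0 tp y.
have tm_lb := minY_le phi y0 tm y; have tm_ub := le_maxY phi y0 tm y.
have v_eq := weightE v_in; rewrite phiE_mix.
set w := weight v in v_eq w_ge0 w_le1 w'_ge0 *; set f := phiE phi tp y; set g := phiE phi tm y.
have h1 : w * ((1 - lam) * A) <= w * ((1 - lam) * f) by rewrite ler_wpM2l // ler_wpM2l.
have h2 : w * ((1 - lam) * f) <= w * (A - lam * b).
  by rewrite ler_wpM2l // (le_trans _ aA) // ler_wpM2l.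
have h3 : (1 - w) * (b - lam * A) <= (1 - w) * ((1 - lam) * g).
  by rewrite ler_wpM2l // (le_trans bB) // ler_wpM2l.
have h4 : (1 - w) * ((1 - lam) * g) <= (1 - w) * ((1 - lam) * b) by rewrite ler_wpM2l // ler_wpM2l.
by apply/andP; split; nra.
Qed.

Section PositiveDiscount.
Hypothesis lam_gt0 : 0 < lam.

(* Solves v = (1 - lam) phi(mix v, y) + lam v' for the value v' promised for the next round. *)
Definition next_target v y := (v - (1 - lam) * phiE phi (mix v) y) / lam.

Lemma next_target_in v y : b <= v <= A -> b <= next_target v y <= A.
Proof.
move=> v_in; have /andP[lb ub] := mix_phiE_bounds y v_in.
by rewrite /next_target ler_pdivlMr // ler_pdivrMr //; apply/andP; split; lra.
Qed.

Fixpoint target_strategy (v : R) (h : history SX SY) : {ffun SX -> R} :=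
  if h is p :: h' then target_strategy (next_target v p.2) h' else mix v.

Lemma target_strategy_beh v : behavioralX (target_strategy v).
Proof. by move=> h; elim: h v => [|p h IH] v /=; [exact: mix_dist|exact: IH]. Qed.

Lemma target_split v (sig : {ffun SY -> R}) : is_dist sig ->
  v = (1 - lam) * mixed_payoff phi (mix v) sig +
      lam * \sum_y sig y * next_target v y.
Proof.
move=> [_ sig_sum1]; rewrite mixed_payoffE !mulr_sumr -big_split /=.
transitivity (\sum_y sig y * v); first by rewrite -mulr_suml sig_sum1 mul1r.
apply: eq_bigr => y _.
by rewrite /next_target; field; rewrite gt_eqF.
Qed.

Lemma target_strategy_gap n v sY : b <= v <= A -> behavioralY sY ->
  lam ^+ n * b <= v - disc_partial phi lam (target_strategy v) sY n <= lam ^+ n * A.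
Proof.
elim: n v sY => [|n IH] v sY v_in sY_beh; first by rewrite disc_partial0 subr0 expr0 !mul1r.
have v_beh := target_strategy_beh v.
rewrite disc_partialS.
set D := fun p => disc_partial phi lam (contX (target_strategy v) p) (contY sY p) n.
have -> : v - ((1 - lam) * mixed_payoff phi (mix v) (sY [::]) +
    lam * \sum_p first_weight (target_strategy v) sY p * D p) =
    lam * \sum_p first_weight (target_strategy v) sY p * (next_target v p.2 - D p).
  under [in RHS]eq_bigr do rewrite mulrBr.
  rewrite sumrB (first_weight_snd _ v_beh (next_target v)) {1}(target_split v (sY_beh [::])).
  by ring.
have /andP[lb ub] := first_weight_comb_bound v_beh sY_beh
  (fun p => IH _ _ (next_target_in p.2 v_in) (behavioralY_cont p sY_beh)).
by rewrite !exprS -!mulrA !ler_pM2l //; apply/andP; split; [exact: lb|exact: ub].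
Qed.

Lemma target_strategy_autocratic : autocratic phi lam (target_strategy 0).
Proof.
have zero_in : b <= 0 <= A by apply/andP; split; [exact: tm_minus.2|exact: tp_plus.2].
have lam_norm : `|lam| < 1 by rewrite ger0_norm.
have pow_cvg0 c : (fun n => - (lam ^+ n * c)) @ \oo --> (0 : R).
  rewrite -[X in _ --> X]oppr0 -(mul0r c).
  by apply: cvgN; apply: cvgM; [exact: cvg_expr|exact: cvg_cst].
move=> sY sY_beh; apply: (squeeze_cvgr _ (pow_cvg0 A) (pow_cvg0 b)).
apply: nearW => n; have /andP[lb ub] := target_strategy_gap n zero_in sY_beh.
by move: lb ub; rewrite sub0r => ? ?; apply/andP; split; lra.
Qed.

End PositiveDiscount.

Lemma target_autocratic : exists sX : stratX R SX SY, behavioralX sX /\ autocratic phi lam sX.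
Proof.
move: (lam_ge0); rewrite le0r => /orP[/eqP lam0|lam_gt0]; last first.
  exists (target_strategy 0).
  by split; [exact: target_strategy_beh|exact: target_strategy_autocratic].
have zero_in : b <= 0 <= A by apply/andP; split; [exact: tm_minus.2|exact: tp_plus.2].
have phiE0 y : phiE phi (mix 0) y = 0.
  have := mix_phiE_bounds y zero_in; rewrite lam0 !mul0r !subr0 mul1r => bounds.
  by apply/eqP; rewrite eq_le andbC.
have [hp hm] := zero_payoff_PhiPlus_PhiMinus y0 (mix_dist 0) phiE0.
exact: stationary_autocratic hp hm.
Qed.

End TargetStrategy.

End Sufficiency.

Lemma continuous_big_var_idx (T U : topologicalType) (I : Type) (op : U -> U -> U)
    (r : seq I) (G : T -> U) (F : I -> T -> U) :
  continuous (fun u : U * U => op u.1 u.2) -> continuous G -> (forall i, continuous (F i)) ->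
  continuous (fun t => \big[op/G t]_(i <- r) F i t).
Proof.
move=> op_cont G_cont F_cont; elim: r => [|i r IH].
  by rewrite (_ : (fun t => _) = G) //; apply/funext => t; rewrite big_nil.
rewrite (_ : (fun t => _) = (fun u : U * U => op u.1 u.2) \o
  (fun t => (F i t, \big[op/G t]_(j <- r) F j t))); last first.
  by apply/funext => t; rewrite big_cons.
move=> t; apply: continuous_comp; last exact: op_cont.
by apply: cvg_pair; [exact: F_cont|exact: IH].
Qed.

Section LambdaMinAttained.
Variables (R : realType) (SX SY : finType) (phi : SX -> SY -> R) (lam : R) (y0 : SY).

Section ContinuityInMixedAction.
Variables (T : topologicalType) (f : T -> {ffun SX -> R}).
Hypothesis f_cont : forall x, continuous (fun t => f t x).

Lemma continuous_phiE y : continuous (fun t => phiE phi (f t) y).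
Proof.
apply: (continuous_big (@add_continuous R^o) (F := fun x t => f t x * phi x y)) => x _ t.
by apply: cvgM; [exact: f_cont|exact: cvg_cst].
Qed.

Lemma continuous_minY : continuous (fun t => minY phi (f t)).
Proof.
rewrite /minY; case: pickP => [y1 _|/(_ y0)//].
apply: continuous_big_var_idx; [exact: min_continuous|exact: continuous_phiE|].
by move=> y; exact: continuous_phiE.
Qed.

Lemma continuous_maxY : continuous (fun t => maxY phi (f t)).
Proof.
rewrite /maxY; case: pickP => [y1 _|/(_ y0)//].
apply: continuous_big_var_idx; [exact: max_continuous|exact: continuous_phiE|].
by move=> y; exact: continuous_phiE.
Qed.

Lemma closed_is_dist : closed [set t | is_dist (f t)].
Proof.
rewrite (_ : [set t | _] = \bigcap_x ((fun t => f t x) @^-1` [set r | 0 <= r]) `&`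
    (fun t => \sum_x f t x) @^-1` [set r | r = 1]); last first.
  apply/seteqP; split=> t /= [t_ge0 t_sum1]; split=> //.
    by move=> x _; exact: t_ge0.
  by move=> x; exact: t_ge0.
apply: closedI.
  apply: closed_bigI => x _; apply: preimage_closed; last exact: closed_ge.
  by move=> t _; exact: f_cont.
apply: preimage_closed; last exact: closed_eq.
move=> t _; apply: (continuous_big (@add_continuous R^o) (F := fun x t => f t x)) => x _.
exact: f_cont.
Qed.

Lemma closed_PhiPlus : closed [set t | PhiPlus phi (f t)].
Proof.
apply: closedI; first exact: closed_is_dist.
apply: (@preimage_closed _ _ (fun t => minY phi (f t)) [set r | 0 <= r]); last exact: closed_ge.
by move=> t _; exact: continuous_minY.
Qed.

Lemma closed_PhiMinus : closed [set t | PhiMinus phi (f t)].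
Proof.
apply: closedI; first exact: closed_is_dist.
apply: (@preimage_closed _ _ (fun t => maxY phi (f t)) [set r | r <= 0]); last exact: closed_le.
by move=> t _; exact: continuous_maxY.
Qed.

End ContinuityInMixedAction.

Local Notation common := (exists t, PhiPlus phi t /\ PhiMinus phi t).
Local Notation VT := 'rV[R]_(#|SX| + #|SX|).

(* A pair of mixed actions of X, stored as one row vector so that [EVT_max_rV] applies. *)
Definition plus_part (v : VT) : {ffun SX -> R} :=
  [ffun x => v ord0 (lshift #|SX| (enum_rank x))].
Definition minus_part (v : VT) : {ffun SX -> R} :=
  [ffun x => v ord0 (rshift #|SX| (enum_rank x))].
Definition pair_vec (tp tm : {ffun SX -> R}) : VT :=
  row_mx (\row_j tp (enum_val j)) (\row_j tm (enum_val j)).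

Lemma plus_part_pair tp tm : plus_part (pair_vec tp tm) = tp.
Proof. by apply/ffunP => x; rewrite ffunE row_mxEl mxE enum_rankK. Qed.

Lemma minus_part_pair tp tm : minus_part (pair_vec tp tm) = tm.
Proof. by apply/ffunP => x; rewrite ffunE row_mxEr mxE enum_rankK. Qed.

Lemma continuous_plus_part x : continuous (fun v => plus_part v x).
Proof.
rewrite (_ : (fun v => _) = fun v : VT => v ord0 (lshift #|SX| (enum_rank x))).
  exact: coord_continuous.
by apply/funext => v; rewrite ffunE.
Qed.

Lemma continuous_minus_part x : continuous (fun v => minus_part v x).
Proof.
rewrite (_ : (fun v => _) = fun v : VT => v ord0 (rshift #|SX| (enum_rank x))).
  exact: coord_continuous.
by apply/funext => v; rewrite ffunE.
Qed.

Definition feasible : set VT := [set v | PhiPlus phi (plus_part v) /\ PhiMinus phi (minus_part v)].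

Lemma feasible_compact : compact feasible.
Proof.
have feasible_closed : closed feasible.
  by apply: closedI;
    [exact: (closed_PhiPlus continuous_plus_part)|exact: (closed_PhiMinus continuous_minus_part)].
apply: (subclosed_compact feasible_closed
  (rV_compact (fun _ : 'I_(#|SX| + #|SX|) => @segment_compact R 0 1))).
move=> v [[dp _] [dm _]] i /=; rewrite -(splitK i) in_itv /=.
case: (fintype.split i) => j /=.
  have -> : v ord0 (lshift #|SX| j) = plus_part v (enum_val j) by rewrite ffunE enum_valK.
  by rewrite (dp.1 _) (dist_le1 _ dp).
have -> : v ord0 (rshift #|SX| j) = minus_part v (enum_val j) by rewrite ffunE enum_valK.
by rewrite (dm.1 _) (dist_le1 _ dm).
Qed.

Definition ratio_denom (tp tm : {ffun SX -> R}) : R :=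
  Num.max (maxY phi tp - maxY phi tm) (minY phi tp - minY phi tm).

Definition ratio_excess (tp tm : {ffun SX -> R}) : R :=
  (minY phi tp - maxY phi tm) - (1 - lam) * ratio_denom tp tm.

Lemma continuous_ratio_excess : continuous (fun v => ratio_excess (plus_part v) (minus_part v)).
Proof.
have c1 := continuous_minY continuous_plus_part; have c2 := continuous_maxY continuous_plus_part.
have c3 := continuous_minY continuous_minus_part; have c4 := continuous_maxY continuous_minus_part.
move=> v; apply: (continuousB (f := fun v => minY phi (plus_part v) - maxY phi (minus_part v))).
  exact: continuousB (c1 v) (c4 v).
apply: (continuousM (s := fun=> 1 - lam)); first exact: cst_continuous.
apply: (continuous_max (f := fun v => maxY phi (plus_part v) - maxY phi (minus_part v))
                       (g := fun v => minY phi (plus_part v) - minY phi (minus_part v))).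
  exact: continuousB (c2 v) (c4 v).
exact: continuousB (c1 v) (c3 v).
Qed.

Lemma ratio_denom_gt0 tp tm : PhiPlus phi tp -> PhiMinus phi tm -> ~ common ->
  0 < ratio_denom tp tm.
Proof.
move=> [tp_dist tp_ge0] [_ tm_le0] no_common; rewrite /ratio_denom lt_max subr_gt0.
apply/orP; left; rewrite ltNge; apply/negP => tp_max_le; apply: no_common.
by exists tp; split; split => //; exact: le_trans tp_max_le tm_le0.
Qed.

Lemma ratio_denom_le tp tm : is_dist tp -> is_dist tm ->
  ratio_denom tp tm <= payoff_bound phi + payoff_bound phi.
Proof.
move=> tp_dist tm_dist; rewrite /ratio_denom ge_max.
have [y1 ->] := maxY_attained phi y0 tp; have [y2 ->] := maxY_attained phi y0 tm.
have [y3 ->] := minY_attained phi y0 tp; have [y4 ->] := minY_attained phi y0 tm.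
have := phiE_bound phi y1 tp_dist; have := phiE_bound phi y2 tm_dist.
have := phiE_bound phi y3 tp_dist; have := phiE_bound phi y4 tm_dist.
rewrite !ler_norml => /andP[? ?] /andP[? ?] /andP[? ?] /andP[? ?].
by apply/andP; split; lra.
Qed.

Lemma ratio_le_of_excess tp tm g : PhiPlus phi tp -> PhiMinus phi tm -> ~ common ->
  ratio_excess tp tm <= g -> g < 0 ->
  Defs.ratio phi tp tm <= 1 - lam + g / (payoff_bound phi + payoff_bound phi + 1).
Proof.
move=> tp_plus tm_minus no_common excess_le g_lt0.
have D_gt0 := ratio_denom_gt0 tp_plus tm_minus no_common.
have D_le := ratio_denom_le tp_plus.1 tm_minus.1.
set K := payoff_bound phi + payoff_bound phi + 1 in D_le *.
have K_gt0 : 0 < K by rewrite /K ltr_pwDr ?addr_ge0 ?payoff_bound_ge0.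
have gD : g <= g / K * ratio_denom tp tm.
  have q_le1 : ratio_denom tp tm / K <= 1 by rewrite ler_pdivrMr // mul1r /K; lra.
  rewrite mulrAC -mulrA -subr_ge0 -{2}[g]mulr1 -mulrBr.
  by rewrite mulr_le0 ?subr_le0 // ltW.
rewrite /Defs.ratio -/(ratio_denom tp tm) ler_pdivrMr //.
by move: excess_le; rewrite /ratio_excess; nra.
Qed.

Lemma lambda_min_attained : (exists tp, PhiPlus phi tp) -> (exists tm, PhiMinus phi tm) ->
  ~ common -> lambda_min phi <= lam ->
  exists tp tm, [/\ PhiPlus phi tp, PhiMinus phi tm & 1 - lam <= Defs.ratio phi tp tm].
Proof.
move=> [tp0 tp0_plus] [tm0 tm0_minus] no_common lam_ge.
have pair0 : feasible (pair_vec tp0 tm0) by rewrite /feasible /= plus_part_pair minus_part_pair.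
have [c /[!inE] -[c_plus c_minus] c_max] := EVT_max_rV (ex_intro _ _ pair0) feasible_compact
  (continuous_subspaceT continuous_ratio_excess).
have [c_ge0|c_lt0] := leP 0 (ratio_excess (plus_part c) (minus_part c)).
  exists (plus_part c), (minus_part c); split => //.
  have D_gt0 := ratio_denom_gt0 c_plus c_minus no_common.
  rewrite /Defs.ratio -/(ratio_denom _ _) ler_pdivlMr //.
  by move: c_ge0; rewrite /ratio_excess; lra.
exfalso; move: lam_ge; rewrite /lambda_min; set Q := [set r | _].
set g := ratio_excess _ _ in c_lt0 c_max.
set K := payoff_bound phi + payoff_bound phi + 1.
have K_gt0 : 0 < K by rewrite /K ltr_pwDr ?addr_ge0 ?payoff_bound_ge0.
have Q_le r : Q r -> r <= 1 - lam + g / K.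
  move=> [tp [tm [tp_plus [tm_minus ->]]]]; apply: ratio_le_of_excess => //.
  have := c_max (pair_vec tp tm); rewrite !inE plus_part_pair minus_part_pair; exact.
have : sup Q <= 1 - lam + g / K by apply: ge_sup Q_le; exists (Defs.ratio phi tp0 tm0), tp0, tm0.
have : g / K < 0 by rewrite pmulr_llt0 ?invr_gt0.
lra.
Qed.

End LambdaMinAttained.

End ZeroDeterminant.

Theorem proposition4 (R : realType) (SX SY : finType)
    (hX : (0 < #|SX|)%N) (hY : (0 < #|SY|)%N)
    (phi : SX -> SY -> R) (lam : R) (hl0 : 0 <= lam) (hl1 : lam < 1) :
  (exists sX : stratX R SX SY, behavioralX sX /\ autocratic phi lam sX) <->
  ((exists tp, PhiPlus phi tp) /\ (exists tm, PhiMinus phi tm) /\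
   ((exists t, PhiPlus phi t /\ PhiMinus phi t) \/
    (~ (exists t, PhiPlus phi t /\ PhiMinus phi t) /\ lambda_min phi <= lam))).
Proof.
have /card_gt0P [y0 _] := hY.
split=> [[sX [sX_beh sX_aut]]|[tp_ex [tm_ex [[t [t_plus t_minus]]|[no_common lam_ge]]]]].
- exact (autocratic_necessary y0 hl0 hl1 sX_beh sX_aut).
- exact (stationary_autocratic lam y0 t_plus t_minus).
- have [tp [tm [tp_plus tm_minus ratio_ge]]] := lambda_min_attained y0 tp_ex tm_ex no_common lam_ge.
  exact (target_autocratic y0 hl0 hl1 tp_plus tm_minus ratio_ge).
Qed.
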